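(* Let $\alpha\in\mathbb{S}_r$, $\beta\in\mathbb{S}_s$ with $\alpha\succ0$, $\beta\succ0$, and let $\sigma\in\mathbb{A}_r$, $\tau\in\mathbb{A}_s$. Consider the self-adjoint linear operator $\Phi:\mathbb{R}^{r\times s}\to\mathbb{R}^{r\times s}$, $\Phi(X):=\alpha X\beta+\sigma X\tau$, on the Hilbert space $\mathbb{R}^{r\times s}$ with the Frobenius inner product $\langle X,Y\rangle=\mathrm{Tr}(X^{T}Y)$. Then $\Phi$ is positive semi-definite if and only if $$\rho(\alpha^{-1}\sigma)\,\rho(\tau\beta^{-1})\le 1,$$ where $\rho(\cdot)$ denotes the spectral radius.
   Context: $\mathbb{S}_k$ and $\mathbb{A}_k$ denote the spaces of real symmetric and real antisymmetric $k\times k$ matrices, respectively. *)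

(* Real matrices are modelled as matrices with entries in the
   real subset (Num.real) of an arbitrary numeric closed field C (e.g. the
   complex numbers); eigenvalues then live in C. *)
From HB Require Import structures.
From mathcomp Require Import all_boot all_order all_algebra.
Set Implicit Arguments. Unset Strict Implicit. Unset Printing Implicit Defensive.
Import Order.TTheory GRing.Theory Num.Theory.
Local Open Scope ring_scope.

Section Defs.
Variable C : numClosedFieldType.

Definition real_mx m n (A : 'M[C]_(m, n)) : Prop := A \is a mxOver Num.real.

Definition sym_mx k (A : 'M[C]_k) : Prop := real_mx A /\ A^T = A.

Definition antisym_mx k (A : 'M[C]_k) : Prop := real_mx A /\ A^T = - A.

Definition posdef_mx k (A : 'M[C]_k) : Prop :=
  forall v : 'rV[C]_k, real_mx v -> v != 0 -> 0 < (v *m A *m v^T) 0 0.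

Definition frob m n (X Y : 'M[C]_(m, n)) : C := \tr (X^T *m Y).

Definition psd_op m n (Phi : 'M[C]_(m, n) -> 'M[C]_(m, n)) : Prop :=
  forall X : 'M[C]_(m, n), real_mx X -> 0 <= frob X (Phi X).

Definition eigenvalues k (A : 'M[C]_k) : seq C :=
  sval (closed_field_poly_normal (char_poly A)).

(* spectral radius: max modulus of an eigenvalue (0 if k = 0) *)
Definition spectral_radius k (A : 'M[C]_k) : C :=
  \big[Num.max/0]_(z <- eigenvalues A) `|z|.

End Defs.

(* Proof idea.
   1. Complexification: Phi is linear and self-adjoint for <X,Y> = Tr(X^T Y),
      so it is psd on real matrices iff  Tr(X^* Phi X) >= 0  for every complex X
      (write X = X1 + i X2 with X1, X2 real).
   2. Simultaneous congruence: a positive definite M and a skew-hermitian S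
      can be written M = b^* b, S = b^* diag(D) b with b invertible and D
      purely imaginary (factor M = a^* a, then unitarily diagonalise the
      skew-hermitian matrix a^-* S a^-1).  Then M^-1 S and S M^-1 are similar
      to diag(D), so D is the spectrum of both.
   3. With alpha = a^* a, sigma = a^* diag(D) a, beta = c^* c, tau = c^* diag(E) c
      and W = a X c^*, the form becomes  sum_ij |W_ij|^2 (1 + D_i E_j),
      which is >= 0 for all W iff  1 + D_i E_j >= 0  for all i, j.
   4. Since D_i, E_j are imaginary, D_i E_j is real, and the spectrum of the
      real matrix alpha^-1 sigma is closed under conjugation (= negation), so
      these inequalities say exactly  rho(alpha^-1 sigma) rho(tau beta^-1) <= 1. *)
From HB Require Import structures.
From mathcomp Require Import all_boot all_order all_algebra ring.
Set Implicit Arguments. Unset Strict Implicit. Unset Printing Implicit Defensive.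
Import Order.TTheory GRing.Theory Num.Theory.
Local Open Scope ring_scope.
Local Open Scope sesquilinear_scope.

Section Lemma6.
Variable C : numClosedFieldType.
Implicit Types k m n : nat.

Lemma adjM m n p (A : 'M[C]_(m, n)) (B : 'M_(n, p)) : (A *m B)^t* = B^t* *m A^t*.
Proof. by rewrite trmx_mul map_mxM. Qed.

Lemma adj1 k : (1%:M : 'M[C]_k)^t* = 1%:M.
Proof. by rewrite trmx1 map_mx1. Qed.

Lemma adj_unitmx k (A : 'M[C]_k) : (A^t* \in unitmx) = (A \in unitmx).
Proof. by rewrite map_unitmx unitmx_tr. Qed.

Lemma adj_real m n (X : 'M[C]_(m, n)) : real_mx X -> X^t* = X^T.
Proof. by move=> rX; rewrite -map_trmx realmxC. Qed.

Lemma bigmax_norm (l : seq C) (mx := \big[Num.max/0]_(z <- l) `|z|) :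
  [/\ 0 <= mx, forall z, z \in l -> `|z| <= mx &
      mx = 0 \/ exists2 z, z \in l & `|z| = mx].
Proof.
rewrite {}/mx; elim: l => [|x l [ge0 ub att]].
  by rewrite big_nil; split; by [|left].
rewrite big_cons; set mx := \big[_/_]_(_ <- _) _ in ge0 ub att *.
rewrite /Num.max /Order.max; case: ifPn => [lt_x | /negP ge_x].
  split=> //; first by move=> z; rewrite inE => /orP[/eqP-> | /ub]; [exact: ltW|].
  by case: att => [|[z zl <-]]; [left | right; exists z; rewrite // inE zl orbT].
have le_x : mx <= `|x| by rewrite real_leNgt ?realE ?normr_ge0 ?ge0; exact/negP.
split=> //; last by right; exists x; rewrite ?mem_head.
by move=> z; rewrite inE => /orP[/eqP-> // | /ub/le_trans]; apply.
Qed.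

Lemma eigenvaluesE k (A : 'M[C]_k) z : (z \in eigenvalues A) = root (char_poly A) z.
Proof.
rewrite /eigenvalues; case: closed_field_poly_normal => l /= ->.
by rewrite rootZ ?root_prod_XsubC // lead_coef_eq0 monic_neq0 // char_poly_monic.
Qed.

Lemma root_split k (D : 'rV[C]_k) z :
  root (\prod_(i < k) ('X - (D 0 i)%:P)) z = (z \in map (D 0) (index_enum 'I_k)).
Proof. by rewrite -(big_map (D 0) xpredT (fun a => 'X - a%:P)) root_prod_XsubC. Qed.

Lemma spectral_radius_split k (A : 'M[C]_k) (D : 'rV[C]_k) :
  char_poly A = \prod_(i < k) ('X - (D 0 i)%:P) ->
  (forall i, `|D 0 i| <= spectral_radius A) /\
  (spectral_radius A = 0 \/ exists i, `|D 0 i| = spectral_radius A).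
Proof.
move=> cpA.
have rootD z : root (char_poly A) z = (z \in map (D 0) (index_enum 'I_k)).
  by rewrite cpA root_split.
have [_ ub att] := bigmax_norm (eigenvalues A); rewrite /spectral_radius.
split=> [i|]; first by apply: ub; rewrite eigenvaluesE rootD map_f ?mem_index_enum.
case: att => [|[z]]; first by left.
by rewrite eigenvaluesE rootD => /mapP[i _ ->]; right; exists i.
Qed.

Lemma char_poly_sim k (A M N : 'M[C]_k) : M *m N = 1%:M ->
  char_poly (M *m A *m N) = char_poly A.
Proof.
move=> MN; rewrite /char_poly /char_poly_mx.
have -> : 'X%:M - map_mx polyC (M *m A *m N) =
    map_mx polyC M *m ('X%:M - map_mx polyC A) *m map_mx polyC N.
  rewrite mulmxBr mulmxBl !map_mxM; congr (_ - _).
  by rewrite -scalemx1 -scalemxAr mulmx1 -scalemxAl -map_mxM MN map_mx1 scalemx1.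
rewrite !det_mulmx mulrC mulrA -det_mulmx -map_mxM.
by rewrite (mulmx1C MN) map_mx1 det1 mul1r.
Qed.

Lemma char_poly_diag k (D : 'rV[C]_k) :
  char_poly (diag_mx D) = \prod_(i < k) ('X - (D 0 i)%:P).
Proof.
rewrite char_poly_trig ?diag_mx_is_trig //.
by apply: eq_bigr => i _; rewrite mxE eqxx mulr1n.
Qed.

Lemma real_mxP m n (A : 'M[C]_(m, n)) :
  reflect (A ^ Num.Def.conjC = A) (A \is a realmx).
Proof.
apply: (iffP idP) => [|fixA]; first exact: realmxC.
apply/mxOverP => i j; apply/CrealP.
by have /matrixP/(_ i j) := fixA; rewrite mxE.
Qed.

Lemma real_mx_root_conj k (A : 'M[C]_k) z :
  real_mx A -> root (char_poly A) z -> root (char_poly A) z^*.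
Proof.
move=> /real_mxP fixA /rootP cpz; apply/rootP.
by rewrite -[in LHS]fixA -map_char_poly horner_map cpz rmorph0.
Qed.

Lemma decomp_real m n (Z : 'M[C]_(m, n)) :
  exists X Y, [/\ real_mx X, real_mx Y & Z = X + 'i *: Y].
Proof.
exists (Z ^ (@Re C)), (Z ^ (@Im C)); split.
- by apply/mxOverP => i j; rewrite mxE Creal_Re.
- by apply/mxOverP => i j; rewrite mxE Creal_Im.
by apply/matrixP => i j; rewrite !mxE -Crect.
Qed.

Lemma tr_swap m n (X Y : 'M[C]_(m, n)) (A : 'M_m) (B : 'M_n) :
  \tr (X^T *m (A *m Y *m B)) = \tr (Y^T *m (A^T *m X *m B^T)).
Proof. by rewrite -mxtrace_tr !trmx_mul !trmxK -!mulmxA mxtrace_mulC -!mulmxA. Qed.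

Section Complexification.
Variables m n : nat.
Variable Phi : 'M[C]_(m, n) -> 'M[C]_(m, n).
Hypothesis PhiD : forall X Y, Phi (X + Y) = Phi X + Phi Y.
Hypothesis PhiZ : forall c X, Phi (c *: X) = c *: Phi X.
Hypothesis PhiS : forall X Y, \tr (X^T *m Phi Y) = \tr (Y^T *m Phi X).

(* The hermitian form of a self-adjoint Phi at X + i Y is the sum of the
   real forms at X and at Y: the cross terms cancel. *)
Lemma complexify X Y : real_mx X -> real_mx Y ->
  \tr ((X + 'i *: Y)^t* *m Phi (X + 'i *: Y)) =
  \tr (X^T *m Phi X) + \tr (Y^T *m Phi Y).
Proof.
move=> rX rY; have -> : (X + 'i *: Y)^t* = X^T - 'i *: Y^T.
  apply/matrixP => i j; rewrite !mxE rmorphD rmorphM /= conjCi mulNr.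
  by rewrite (CrealP (mxOverP rX _ _)) (CrealP (mxOverP rY _ _)).
rewrite PhiD PhiZ mulmxDl !mulmxDr !mulNmx -!scalemxAl -!scalemxAr.
rewrite !mxtraceD !raddfN /= !mxtraceZ (PhiS Y X).
by rewrite mulrA -expr2 sqrCi mulN1r opprK addrA addrK.
Qed.

Lemma psd_op_complexP :
  psd_op Phi <-> forall Z, 0 <= \tr (Z^t* *m Phi Z).
Proof.
split=> [psdPhi Z | formP X rX]; last by rewrite /frob -adj_real.
have [X [Y [rX rY ->]]] := decomp_real Z.
by rewrite complexify // addr_ge0 //; [apply: psdPhi | apply: psdPhi].
Qed.

End Complexification.

Lemma posdef_complex k (M : 'M[C]_k) : sym_mx M -> posdef_mx M ->
  forall v : 'rV_k, v != 0 -> 0 < (v *m M *m v^t*) 0 0.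
Proof.
move=> [_ sM] pdM v v0.
pose q (X : 'rV[C]_k) := \tr (X^T *m (X *m M)).
have qE X : q X = (X *m M *m X^T) 0 0 by rewrite /q mxtrace_mulC trace_mx11.
have q_gt0 X : real_mx X -> X != 0 -> 0 < q X by move=> rX X0; rewrite qE pdM.
have q_ge0 X : real_mx X -> 0 <= q X.
  move=> rX; have [->|X0] := eqVneq X 0; last exact/ltW/q_gt0.
  by rewrite /q mul0mx mulmx0 mxtrace0.
have qS (X Y : 'rV[C]_k) : \tr (X^T *m (Y *m M)) = \tr (Y^T *m (X *m M)).
  by have := tr_swap X Y 1%:M M; rewrite trmx1 !mul1mx sM; apply.
have [X [Y [rX rY vE]]] := decomp_real v.
rewrite -trace_mx11 mxtrace_mulC vE.
rewrite (complexify (fun X => mulmxDl X^~ M)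
                    (fun c X => esym (scalemxAl c X M)) qS rX rY).
have [X0|X0] := eqVneq X 0; last exact: ltr_pwDl (q_gt0 _ rX X0) (q_ge0 _ rY).
apply: ltr_wpDl (q_ge0 _ rX) (q_gt0 _ rY _); apply: contraNneq v0 => Y0.
by rewrite vE X0 Y0 scaler0 addr0.
Qed.

Lemma mul_adj_entry m n p (A : 'M[C]_(m, p)) (B : 'M_(n, p)) i j :
  (A *m B^t*) i j = (row i A *m (row j B)^t*) 0 0.
Proof. by rewrite !mxE; apply: eq_bigr => l _; rewrite !mxE. Qed.

(* A positive definite real symmetric matrix is a Gram matrix a^* a with a
   invertible: diagonalise it unitarily and take square roots of the (positive)
   eigenvalues. *)
Lemma posdef_factor k (M : 'M[C]_k) : sym_mx M -> posdef_mx M ->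
  exists2 a : 'M_k, a \in unitmx & M = a^t* *m a.
Proof.
move=> symM pdM; have [rM sM] := symM.
have hermM : M \is hermsymmx.
  apply: realsym_hermsym => //; apply/is_hermitianmxP.
  by rewrite expr0 scale1r map_mx_id // sM.
have /orthomx_spectralP := hermitian_normalmx hermM.
set P := spectralmx M; set d := spectral_diag M.
have Pu : P \is unitarymx := spectral_unitarymx M.
rewrite invmx_unitary // => ME.
have d_gt0 j : 0 < d 0 j.
  have -> : d 0 j = (row j P *m M *m (row j P)^t*) 0 0.
    rewrite -row_mul -mul_adj_entry ME !mulmxA mulmxtVK //.
    by rewrite (unitarymxP Pu) mul1mx mxE eqxx mulr1n.
  apply: posdef_complex => //; apply: contraTneq isT => Pj0.
  have /row_unitarymxP/(_ j j) := Pu.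
  by rewrite eqxx dotmxE Pj0 mul0mx mxE => /esym/eqP; rewrite oner_eq0.
pose s := \row_j sqrtC (d 0 j).
have s_real j : (sqrtC (d 0 j))^* = sqrtC (d 0 j).
  exact/conj_Creal/sqrtC_real/ltW.
exists (diag_mx s *m P).
  rewrite unitmx_mul (unitarymx_unit Pu) andbT unitmxE det_diag unitfE.
  by apply/prodf_neq0 => j _; rewrite mxE sqrtC_eq0 lt0r_neq0.
rewrite adjM tr_diag_mx map_diag_mx mulmxA -(mulmxA _ _ (diag_mx s)) mulmx_diag.
rewrite {1}ME; congr (_ *m diag_mx _ *m _); apply/rowP => j.
by rewrite !mxE -[X in _ = X * _]/((sqrtC (d 0 j))^*) s_real -expr2 sqrtCK.
Qed.

Lemma skew_unitary_diag k (S : 'M[C]_k) : S^t* = - S ->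
  exists (U : 'M_k) (D : 'rV_k), [/\ U \is unitarymx, S = U^t* *m diag_mx D *m U &
                  forall i, (D 0 i)^* = - D 0 i].
Proof.
move=> skS; have normS : S \is normalmx.
  by apply/normalmxP; rewrite skS mulmxN mulNmx.
have /orthomx_spectralP := normS.
set U := spectralmx S; set D := spectral_diag S.
have Uu : U \is unitarymx := spectral_unitarymx S.
rewrite invmx_unitary // => SE; exists U, D; split=> // i.
have DE : diag_mx D = U *m S *m U^t*.
  by rewrite SE !mulmxA mulmxtVK // (unitarymxP Uu) mul1mx.
have : (diag_mx D)^t* = - diag_mx D.
  by rewrite DE !adjM trmxCK skS mulNmx mulmxN mulmxA.
rewrite tr_diag_mx map_diag_mx => /matrixP/(_ i i).
by rewrite !mxE eqxx !mulr1n.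
Qed.

Lemma congruence_diag k (M S : 'M[C]_k) : sym_mx M -> posdef_mx M ->
  S^t* = - S ->
  exists (b : 'M_k) (D : 'rV_k), [/\ b \in unitmx, M = b^t* *m b,
                  S = b^t* *m diag_mx D *m b & forall i, (D 0 i)^* = - D 0 i].
Proof.
move=> symM pdM skS; have [a au ME] := posdef_factor symM pdM.
pose S' := (invmx a)^t* *m S *m invmx a.
have SE : S = a^t* *m S' *m a.
  by rewrite /S' !mulmxA -adjM mulVmx // adj1 mul1mx mulmxKV.
have skS' : S'^t* = - S'.
  by rewrite /S' !adjM trmxCK skS mulNmx mulmxN mulmxA.
have [U [D [Uu S'E imD]]] := skew_unitary_diag skS'.
exists (U *m a), D; split=> //.
- by rewrite unitmx_mul unitarymx_unit.
- by rewrite adjM !mulmxA mulmxKtV.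
by rewrite SE S'E adjM !mulmxA.
Qed.

(* In that situation diag(D) is similar to both M^-1 S and S M^-1, so D lists
   the eigenvalues of both. *)
Lemma congruence_char_poly k (M S b : 'M[C]_k) (D : 'rV_k) : b \in unitmx ->
  M = b^t* *m b -> S = b^t* *m diag_mx D *m b ->
  char_poly (invmx M *m S) = \prod_(i < k) ('X - (D 0 i)%:P) /\
  char_poly (S *m invmx M) = \prod_(i < k) ('X - (D 0 i)%:P).
Proof.
move=> bu ME SE; have b'u : b^t* \in unitmx by rewrite adj_unitmx.
have Mu : M \in unitmx by rewrite ME unitmx_mul b'u.
rewrite -char_poly_diag; split.
- have -> : S = M *m (invmx b *m diag_mx D *m b) by rewrite ME SE !mulmxA mulmxK.
  by rewrite mulKmx // char_poly_sim // mulVmx.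
- have -> : S = b^t* *m diag_mx D *m invmx (b^t*) *m M.
    by rewrite SE ME -!mulmxA mulKmx.
  by rewrite mulmxK // char_poly_sim // mulmxV.
Qed.

Lemma form_congruence m n (a A : 'M[C]_m) (c B : 'M[C]_n) (X : 'M_(m, n)) :
  \tr (X^t* *m (a^t* *m a *m X *m (c^t* *m c) +
                a^t* *m A *m a *m X *m (c^t* *m B *m c))) =
  \tr ((a *m X *m c^t*)^t* *m (a *m X *m c^t* + A *m (a *m X *m c^t*) *m B)).
Proof.
rewrite !mulmxDr !mxtraceD !adjM trmxCK.
by congr (_ + _); rewrite !mulmxA mxtrace_mulC !mulmxA.
Qed.

Lemma diag_form m n (W : 'M[C]_(m, n)) (D : 'rV_m) (E : 'rV_n) :
  \tr (W^t* *m (W + diag_mx D *m W *m diag_mx E)) =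
  \sum_j \sum_i (W i j)^* * W i j * (1 + D 0 i * E 0 j).
Proof.
rewrite mul_mx_diag mul_diag_mx; apply: eq_bigr => j _; rewrite !mxE.
by apply: eq_bigr => i _; rewrite !mxE; ring.
Qed.

Lemma diag_form_ge0P m n (D : 'rV[C]_m) (E : 'rV_n) :
  (forall W : 'M_(m, n), 0 <= \tr (W^t* *m (W + diag_mx D *m W *m diag_mx E)))
  <-> forall i j, 0 <= 1 + D 0 i * E 0 j.
Proof.
split=> [formP i j | coefP W].
  have := formP (delta_mx i j); rewrite diag_form (bigD1 j) // (bigD1 i) //=.
  rewrite [X in _ + X + _]big1 => [|i' i'i]; last first.
    by rewrite !mxE (negbTE i'i) mulr0 mul0r.
  rewrite [X in _ + X]big1 => [|j' j'j]; last first.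
    by apply: big1 => i' _; rewrite !mxE (negbTE j'j) andbF mulr0 mul0r.
  by rewrite !addr0 !mxE !eqxx rmorph1 !mul1r.
rewrite diag_form; apply: sumr_ge0 => j _; apply: sumr_ge0 => i _.
by rewrite mulr_ge0 // -normCKC exprn_ge0.
Qed.

Lemma imaginary_mul_real (z w : C) : z^* = - z -> w^* = - w -> z * w \is Num.real.
Proof.
move=> zi wi; apply/CrealP.
by rewrite [LHS](rmorphM _ z w : _ = z^* * w^*) zi wi mulrNN.
Qed.

(* Spectral form of the positivity criterion: for a real matrix A with purely
   imaginary spectrum D and a matrix B with purely imaginary spectrum E,
   all  1 + D_i E_j  are nonnegative iff  rho(A) rho(B) <= 1.  Reality of A
   is needed to pick, for each i, an eigenvalue -D_i = D_i^* of A. *)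
Lemma imaginary_spectra_criterion k l (A : 'M[C]_k) (B : 'M[C]_l)
    (D : 'rV[C]_k) (E : 'rV[C]_l) :
  real_mx A ->
  char_poly A = \prod_(i < k) ('X - (D 0 i)%:P) ->
  char_poly B = \prod_(j < l) ('X - (E 0 j)%:P) ->
  (forall i, (D 0 i)^* = - D 0 i) -> (forall j, (E 0 j)^* = - E 0 j) ->
  (forall i j, 0 <= 1 + D 0 i * E 0 j) <->
  spectral_radius A * spectral_radius B <= 1.
Proof.
move=> rA cpA cpB imD imE.
have DE_real i j : D 0 i * E 0 j \is Num.real by apply: imaginary_mul_real.
have [ubA attA] := spectral_radius_split cpA.
have [ubB attB] := spectral_radius_split cpB.
split=> [coefP | rhoP i j].
  case: attA => [->|[i <-]]; first by rewrite mul0r ler01.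
  case: attB => [->|[j <-]]; first by rewrite mulr0 ler01.
  have [i' [Di' DE_le0]] : exists i', `|D 0 i'| = `|D 0 i| /\ D 0 i' * E 0 j <= 0.
    case: (real_ge0P (DE_real i j)) => [DE_ge0|DE_lt0]; last by exists i; rewrite ltW.
    have : root (char_poly A) (D 0 i)^*.
      by apply: real_mx_root_conj; rewrite // cpA root_split map_f ?mem_index_enum.
    rewrite cpA root_split => /mapP[i' _ Di']; exists i'.
    by rewrite -Di' imD normrN mulNr oppr_le0.
  rewrite -Di' -normrM ler0_norm // -subr_ge0 opprK; exact: coefP.
have : `|D 0 i * E 0 j| <= 1.
  by rewrite normrM (le_trans _ rhoP) // ler_pM ?normr_ge0.
by rewrite real_ler_norml // => /andP[DE_ge _]; rewrite addrC -[1]opprK subr_ge0.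
Qed.

Lemma forall_congruence m n (a : 'M[C]_m) (c : 'M[C]_n) (P : 'M_(m, n) -> Prop) :
  a \in unitmx -> c \in unitmx ->
  (forall X, P (a *m X *m c^t*)) <-> forall W, P W.
Proof.
move=> au cu; split=> [PX W | PW X //].
have c'u : c^t* \in unitmx by rewrite adj_unitmx.
have := PX (invmx a *m W *m invmx (c^t*)).
by rewrite !mulmxA mulmxV // mul1mx mulmxKV.
Qed.

Lemma antisym_adj k (S : 'M[C]_k) : antisym_mx S -> S^t* = - S.
Proof. by case=> rS skS; rewrite adj_real. Qed.

Lemma sandwich_psd_complexP m n (alpha sigma : 'M[C]_m) (beta tau : 'M[C]_n) :
  alpha^T = alpha -> beta^T = beta -> sigma^T = - sigma -> tau^T = - tau ->
  psd_op (fun X : 'M_(m, n) => alpha *m X *m beta + sigma *m X *m tau) <->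
  forall Z, 0 <= \tr (Z^t* *m (alpha *m Z *m beta + sigma *m Z *m tau)).
Proof.
move=> sa sb ss st; apply: psd_op_complexP => [X Y | c X | X Y].
- by rewrite !mulmxDr !mulmxDl addrACA.
- by rewrite -!scalemxAr -!scalemxAl scalerDr.
rewrite !mulmxDr !mxtraceD (tr_swap X Y alpha) (tr_swap X Y sigma).
by rewrite sa sb ss st mulNmx mulmxN mulNmx opprK.
Qed.

End Lemma6.

Theorem lemma6 (C : numClosedFieldType) (r s : nat)
    (alpha sigma : 'M[C]_r) (beta tau : 'M[C]_s)
    (Halpha : sym_mx alpha) (Hbeta : sym_mx beta)
    (Halpha_pd : posdef_mx alpha) (Hbeta_pd : posdef_mx beta)
    (Hsigma : antisym_mx sigma) (Htau : antisym_mx tau) :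
  psd_op (fun X : 'M[C]_(r, s) => alpha *m X *m beta + sigma *m X *m tau)
  <-> spectral_radius (invmx alpha *m sigma) * spectral_radius (tau *m invmx beta) <= 1.
Proof.
have [a [D [au alphaE sigmaE imD]]] :=
  congruence_diag Halpha Halpha_pd (antisym_adj Hsigma).
have [c [E [cu betaE tauE imE]]] :=
  congruence_diag Hbeta Hbeta_pd (antisym_adj Htau).
have [cpA _] := congruence_char_poly au alphaE sigmaE.
have [_ cpB] := congruence_char_poly cu betaE tauE.
have rA : real_mx (invmx alpha *m sigma).
  by apply/real_mxP; rewrite map_mxM map_invmx !realmxC ?Hsigma.1 ?Halpha.1.
rewrite -(imaginary_spectra_criterion rA cpA cpB imD imE) -diag_form_ge0P.
rewrite sandwich_psd_complexP ?Halpha.2 ?Hbeta.2 ?Hsigma.2 ?Htau.2 //.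
rewrite -[X in _ <-> X](forall_congruence _ au cu) alphaE betaE sigmaE tauE.
by split=> formP X; have := formP X; rewrite form_congruence.
Qed.
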